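(* Let $u$ be a parking sorted configuration on $K_{m,n}$ (with arbitrary value $u_{a_m}\in\mathbb Z$ at the sink). Then $$\mathrm{xpara}(u)=(m-1)(n-1)+\mathrm{rank}(u)-\mathrm{degree}(u)\qquad\text{and}\qquad \mathrm{ypara}(u)=\mathrm{rank}(u)+1.$$
   Context: Let $m,n\ge 1$. $K_{m,n}$ is the complete bipartite graph with vertex set $V=A_m\sqcup B_n$, $A_m=\{a_1,\dots,a_m\}$, $B_n=\{b_1,\dots,b_n\}$, with exactly one edge $\{a_i,b_j\}$ for every $i,j$; $a_m$ is the sink. A configuration is a function $u:V\to\mathbb Z$; $\mathrm{degree}(u)=\sum_c u_c$. For $c\in V$ with graph degree $d_c$, $\Delta^{(c)}=d_c e_c-\sum_{c'\text{ adjacent to }c}e_{c'}$, with $e_c$ the indicator configuration of $c$; $\Delta^{(C)}=\sum_{c\in C}\Delta^{(c)}$. Toppling equivalence: difference in the integer span of the $\Delta^{(c)}$. Effective: toppling equivalent to a non-negative configuration. $\mathrm{rank}(u)=-1+\min\{\mathrm{degree}(f): f\ge0,\ u-f\text{ not effective}\}$. $u$ is parking if $u_c\ge0$ for $c\ne a_m$ and for every non-empty $C\subseteq V\setminus\{a_m\}$, $u-\Delta^{(C)}$ has a negative value at a vertex other than $a_m$; sorted if $u_{a_1}\le\dots\le u_{a_{m-1}}$ and $u_{b_1}\le\dots\le u_{b_n}$. The $r$-vector of a parking sorted $u$ is $(r_1,\dots,r_n)$, $r_i=u_{b_i}+1-\#\{j\in\{1,\dots,m-1\}: u_{a_j}+1\le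 i-1\}$ (one has $-m+2\le r_i\le 1$). Labels: for $\sigma\in\mathbb Z$ write $\sigma=qn+t$ with $q,t\in\mathbb Z$, $0\le t<n$; call $\sigma$ right (for $u$) if $q+r_{t+1}\ge 1$ and left otherwise (in the paper, $\sigma$ labels a cell of the cylindric diagram, lying to the right resp. left of the red path). Define $\mathrm{xpara}(u)=\#\{\sigma\in\mathbb Z:\sigma>u_{a_m},\ \sigma\text{ left}\}$ (unvisited left cells) and $\mathrm{ypara}(u)=\#\{\sigma\in\mathbb Z:\sigma\le u_{a_m},\ \sigma\text{ right}\}$ (visited right cells); both are finite. *)

From HB Require Import structures.
From mathcomp Require Import all_boot all_order all_algebra.
From Stdlib Require Import ClassicalEpsilon.
Set Implicit Arguments. Unset Strict Implicit. Unset Printing Implicit Defensive.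
Import Order.TTheory GRing.Theory Num.Theory.
Local Open Scope ring_scope.

(* Vertices of K_{m,n}: inl i = a_{i+1} (i : 'I_m), inr j = b_{j+1} (j : 'I_n). *)
Definition V (m n : nat) : finType := ('I_m + 'I_n)%type.

Definition config (m n : nat) := V m n -> int.

Lemma sink_lt (m : nat) : (0 < m)%N -> (m.-1 < m)%N.
Proof. by rewrite ltn_predL. Qed.

Definition sink (m n : nat) (Hm : (0 < m)%N) : V m n := inl (Ordinal (sink_lt Hm)).

Definition is_sink (m n : nat) (c : V m n) : bool :=
  match c with inl i => (val i == m.-1)%N | inr _ => false end.

Definition adj (m n : nat) (c x : V m n) : bool :=
  match c, x with
  | inl _, inr _ => true
  | inr _, inl _ => true
  | _, _ => false
  end.

Definition gdeg (m n : nat) (c : V m n) : int :=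
  match c with inl _ => n%:Z | inr _ => m%:Z end.

Definition Delta (m n : nat) (c : V m n) : config m n :=
  fun x => (if x == c then gdeg c else 0) - (if adj c x then 1 else 0).

Definition DeltaSet (m n : nat) (C : {set V m n}) : config m n :=
  fun x => \sum_(c in C) Delta c x.

Definition degree (m n : nat) (u : config m n) : int := \sum_(c : V m n) u c.

Definition nonneg (m n : nat) (f : config m n) : Prop := forall x, 0 <= f x.

Definition topp_equiv (m n : nat) (u v : config m n) : Prop :=
  exists z : V m n -> int, forall x, u x - v x = \sum_(c : V m n) z c * Delta c x.

Definition effective (m n : nat) (u : config m n) : Prop :=
  exists f : config m n, nonneg f /\ topp_equiv u f.

Definition csub (m n : nat) (u f : config m n) : config m n := fun x => u x - f x.

Definition rank_spec (m n : nat) (u : config m n) (r : int) : Prop :=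
  (exists f : config m n, [/\ nonneg f, ~ effective (csub u f) & degree f = r + 1])
  /\ (forall f : config m n, nonneg f -> ~ effective (csub u f) -> r + 1 <= degree f).

Definition rank (m n : nat) (u : config m n) : int :=
  epsilon (inhabits 0) (rank_spec u).

Definition parking (m n : nat) (u : config m n) : Prop :=
  (forall c : V m n, ~~ is_sink c -> 0 <= u c) /\
  (forall C : {set V m n}, C != set0 -> (forall c, c \in C -> ~~ is_sink c) ->
     exists x : V m n, ~~ is_sink x /\ u x - DeltaSet C x < 0).

Definition sorted_conf (m n : nat) (u : config m n) : Prop :=
  (forall i j : 'I_m, (i <= j)%N -> (j < m.-1)%N -> u (inl i) <= u (inl j)) /\
  (forall i j : 'I_n, (i <= j)%N -> u (inr i) <= u (inr j)).

(* r-vector, 0-indexed: rvec u k = r_{k+1}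
   = u_{b_{k+1}} + 1 - #{ j in 1..m-1 : u_{a_j} + 1 <= k } (for k < n) *)
Definition rvec (m n : nat) (u : config m n) (k : nat) : int :=
  match @insub nat (fun k => (k < n)%N) 'I_n k with
  | Some j => u (inr j) + 1
              - (#|[pred i : 'I_m | (i < m.-1)%N && (u (inl i) + 1 <= k%:Z)]|)%:Z
  | None => 0
  end.

Definition is_right (m n : nat) (u : config m n) (sigma : int) : bool :=
  1 <= (sigma %/ n%:Z)%Z + rvec u `|(sigma %% n%:Z)%Z|%N.

Definition counts (P : int -> Prop) (N : int) : Prop :=
  exists s : seq int, [/\ uniq s, (forall x, x \in s <-> P x) & (size s)%:Z = N].

From HB Require Import structures.
From mathcomp Require Import all_boot all_order all_algebra zify ring lra.
From Stdlib Require Import ClassicalEpsilon.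
Set Implicit Arguments. Unset Strict Implicit. Unset Printing Implicit Defensive.
Import Order.TTheory GRing.Theory Num.Theory.
Local Open Scope ring_scope.

(* A configuration w of K_{m,n} is effective iff there are total numbers of
   firings X of the a's and Y of the b's with X <= capA w Y and Y <= capB w X,
   where capA and capB are sums of floors.  The solutions are invariant under
   (X, Y) |-> (X + m, Y + n), so those with 1 <= Y <= n form a finite set.
   Removing one chip destroys at most one of them, and removing it at a well
   chosen a-vertex destroys exactly one, so rank w + 1 is their number.  For u
   parking and sorted, the solutions with Y = n - t are the X between
   m - u_{b_{t+1}} and capA u Y, and the signed length c_t of that interval is
   also the number of visited right cells minus the number of unvisited left
   cells in the column of residue t of the cylindric diagram.  Hence
   ypara u = sum_t max(0, c_t) = rank u + 1 and xpara u = sum_t max(0, -c_t)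
   = rank u + 1 - sum_t c_t, while Hermite's identity gives
   sum_t c_t = degree u + 1 - (m - 1)(n - 1). *)

(** * Floors and residues *)

Lemma divz_unique (x q d : int) : 0 < d -> q * d <= x < (q + 1) * d -> (x %/ d)%Z = q.
Proof.
move=> d0 /andP[lo hi]; apply/eqP; rewrite eq_le lez_divRL // lo andbT.
by rewrite -ltzD1 ltz_divLR.
Qed.

Lemma divzDMr (x k d : int) : d != 0 -> ((x + k * d) %/ d)%Z = (x %/ d)%Z + k.
Proof. by move=> d0; rewrite addrC divzMDl // addrC. Qed.

Lemma divz_predE (x d : int) : 0 < d -> ((x - 1) %/ d)%Z =
  (x %/ d)%Z - (if (d %| x)%Z then 1 else 0).
Proof.
move=> d0; have r0 := modz_ge0 x (lt0r_neq0 d0); have rd := ltz_pmod x d0.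
have ex := divz_eq x d.
case: (@dvdz_mod0P d x) => rx; apply: divz_unique => //;
  move: (x %/ d)%Z (x %% d)%Z ex r0 rd rx => q r -> *; nia.
Qed.

Lemma dvdz_sep (d a b : int) : 0 < d -> (d %| a)%Z -> (d %| b)%Z ->
  [\/ a = b, a + d <= b | b + d <= a].
Proof.
move=> d0 /dvdzP[qa ->] /dvdzP[qb ->].
by case: (ltrgtP qa qb) => h; [constructor 2 | constructor 3 | constructor 1]; nia.
Qed.

Lemma divz_modz_nat (x : int) (n : nat) : (0 < n)%N ->
  x = (x %/ n)%Z * n%:Z + `|(x %% n)%Z|%N /\ (`|(x %% n)%Z| < n)%N.
Proof.
move=> n0; have np : (0 : int) < n%:Z by rewrite ltz_nat.
split; first by rewrite gez0_abs ?modz_ge0 ?gt_eqF //; exact: divz_eq.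
by rewrite -ltz_nat gez0_abs ?modz_ge0 ?gt_eqF // ltz_pmod.
Qed.

Lemma divz_modz_natE (q : int) (t n : nat) : (t < n)%N ->
  ((q * n%:Z + t%:Z) %/ n)%Z = q /\ `|((q * n%:Z + t%:Z) %% n)%Z|%N = t.
Proof.
move=> tn; have np : (0 : int) < n%:Z by rewrite ltz_nat; lia.
have qE : ((q * n%:Z + t%:Z) %/ n)%Z = q by apply: divz_unique => //; lia.
by split=> //; rewrite /modz qE addrAC subrr add0r.
Qed.

Lemma uniq_count_le1 (T : eqType) (P : pred T) (s : seq T) :
  uniq s -> (forall x y, P x -> P y -> x = y) -> (count P s <= 1)%N.
Proof.
elim: s => //= x s IH /andP[xs us] Puniq.
case Px: (P x) => /=; last by rewrite add0n IH.
suff -> : count P s = 0%N by [].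
apply/eqP; rewrite -leqn0 leqNgt -has_count; apply/hasP => -[y ys Py].
by move: xs; rewrite (Puniq x y Px Py) ys.
Qed.

Lemma sum_ord_geq (t n : nat) : (t <= n)%N ->
  \sum_(j < n) (if (t <= j)%N then 1 else 0 : int) = (n - t)%:Z.
Proof.
move=> tn; rewrite -(big_mkord xpredT (fun j => if (t <= j)%N then 1 else 0 : int)).
rewrite (big_cat_nat (leq0n t) tn) /= big_nat_cond big1 ?add0r; last first.
  by move=> j /andP[/andP[_ jt] _]; rewrite leqNgt jt.
rewrite big_nat_cond (eq_bigr (fun _ => 1)); last by move=> j /andP[/andP[-> _] _].
by rewrite -big_nat_cond sumr_const_nat -natz.
Qed.

(* Hermite's identity. *)
Lemma sum_divz_shift (n : nat) (S : int) : (0 < n)%N ->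
  \sum_(t < n) ((S - t%:Z) %/ n)%Z = S - n%:Z + 1.
Proof.
move=> n0; have np : (0 : int) < n%:Z by rewrite ltz_nat.
have [Se sn] := divz_modz_nat S n0.
move: (S %/ n)%Z `|(S %% n)%Z|%N Se sn => q s -> sn.
rewrite (eq_bigr (fun t : 'I_n => q - if (s.+1 <= t)%N then 1 else 0)) => [|t _].
  by rewrite sumrB sum_ord_geq // sumr_const card_ord -mulr_natr natz; lia.
have tn := ltn_ord t; apply: divz_unique => //; case: (ltnP s t) => st; nia.
Qed.

(** * Counting integers *)

Definition zrange (a b : int) : seq int :=
  [seq a + k%:Z | k <- iota 0 `|Num.max 0 (b - a + 1)|].

Lemma mem_zrange a b x : (x \in zrange a b) = (a <= x <= b).
Proof.
apply/mapP/idP => [[k]|/andP[ax xb]].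
  by rewrite mem_iota add0n; case: (lerP 0 (b - a + 1)) => ? kab ->; lia.
by exists `|x - a|%N; [rewrite mem_iota add0n; case: (lerP 0 (b - a + 1)) | ]; lia.
Qed.

Lemma zrange_uniq a b : uniq (zrange a b).
Proof. by rewrite map_inj_uniq ?iota_uniq // => k1 k2 /= /addrI []. Qed.

Lemma size_zrange a b : (size (zrange a b))%:Z = Num.max 0 (b - a + 1).
Proof. by rewrite size_map size_iota gez0_abs // le_max lexx. Qed.

Lemma max0N (R : realDomainType) (x : R) : Num.max 0 (- x) = Num.max 0 x - x.
Proof.
case: (lerP 0 x) => hx; first by rewrite (max_idPl _) ?(max_idPr _) ?subrr // oppr_le0.
by rewrite (max_idPr _) ?(max_idPl _) ?sub0r // ?oppr_ge0 ltW.
Qed.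

Lemma count_zrange a b lo hi : {subset zrange lo hi <= zrange a b} ->
  count (fun x => lo <= x <= hi) (zrange a b) = size (zrange lo hi).
Proof.
move=> sub; rewrite -size_filter; apply: perm_size.
apply: uniq_perm; rewrite ?filter_uniq ?zrange_uniq // => x.
rewrite mem_filter -mem_zrange; apply/andP/idP => [[]//|x_lohi].
by split; last exact: sub.
Qed.

Lemma natz_sumn_iota (n : nat) (f : nat -> nat) :
  (sumn [seq f t | t <- iota 0 n])%:Z = \sum_(t < n) (f t)%:Z.
Proof.
rewrite sumnE big_map (big_morph Posz PoszD (erefl _)).
have -> : iota 0 n = index_iota 0 n by rewrite /index_iota subn0.
by rewrite big_mkord.
Qed.

Lemma counts_by_residue (n : nat) (lo hi : nat -> int) (P : int -> Prop) : (0 < n)%N ->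
  (forall x, P x <-> lo `|(x %% n)%Z|%N <= (x %/ n)%Z <= hi `|(x %% n)%Z|%N) ->
  counts P (\sum_(t < n) Num.max 0 (hi t - lo t + 1)).
Proof.
move=> n0 Pres.
exists [seq q * n%:Z + t%:Z | t <- iota 0 n, q <- zrange (lo t) (hi t)]; split.
- apply: allpairs_uniq_dep => [|t _|]; rewrite ?iota_uniq ?zrange_uniq //.
  move=> [t1 q1] [t2 q2] /allpairsPdep[t1' [q1' [t1n _ e1]]].
  move=> /allpairsPdep[t2' [q2' [t2n _ e2]]] /= e.
  case: e1 => ? ?; case: e2 => ? ?; subst; move: t1n t2n; rewrite !mem_iota !add0n => t1n t2n.
  have [d1 m1] := divz_modz_natE q1' t1n; have [d2 m2] := divz_modz_natE q2' t2n.
  have -> : q1' = q2' by rewrite -d1 e d2.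
  by have -> : t1' = t2' by rewrite -m1 e m2.
- move=> x; split => [/allpairsPdep[t [q [+ + ->]]]|/Pres Px].
    rewrite mem_iota add0n mem_zrange => tn qt.
    by apply/Pres; have [-> ->] := divz_modz_natE q tn.
  have [xE xn] := divz_modz_nat x n0.
  apply/allpairsPdep; exists `|(x %% n)%Z|%N, (x %/ n)%Z.
  by rewrite mem_iota add0n mem_zrange.
- rewrite size_allpairs_dep natz_sumn_iota; apply: eq_bigr => t _; exact: size_zrange.
Qed.

(** * Effective configurations of K_{m,n} *)

Section CompleteBipartite.
Variables m n : nat.
Hypotheses (m_gt0 : (0 < m)%N) (n_gt0 : (0 < n)%N).

Let mZ_gt0 : (0 : int) < m%:Z. Proof. by rewrite ltz_nat. Qed.
Let nZ_gt0 : (0 : int) < n%:Z. Proof. by rewrite ltz_nat. Qed.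

Lemma sum_Delta_inl (z : V m n -> int) (i : 'I_m) :
  \sum_(c : V m n) z c * Delta c (inl i) = z (inl i) * n%:Z - \sum_(j < n) z (inr j).
Proof.
rewrite big_sumType /Delta /= (bigD1 i) //= eqxx big1 => [|i' i'i]; last first.
  by rewrite -sum_eqE /= eq_sym (negbTE i'i) subr0 mulr0.
by rewrite addr0 subr0 -sumrN; congr (_ + _); apply: eq_bigr => j _; rewrite sub0r mulrN1.
Qed.

Lemma sum_Delta_inr (z : V m n -> int) (j : 'I_n) :
  \sum_(c : V m n) z c * Delta c (inr j) = z (inr j) * m%:Z - \sum_(i < m) z (inl i).
Proof.
rewrite big_sumType /Delta /= addrC (bigD1 j) //= eqxx big1 => [|j' j'j]; last first.
  by rewrite -sum_eqE /= eq_sym (negbTE j'j) subr0 mulr0.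
by rewrite addr0 subr0 -sumrN; congr (_ + _); apply: eq_bigr => i _; rewrite sub0r mulrN1.
Qed.

(* If the b's fire Y times in total, capA w Y is the largest total number of
   firings of the a's keeping all of them nonnegative; capB is symmetric. *)
Definition capA (w : config m n) (Y : int) : int := \sum_(i < m) ((w (inl i) + Y) %/ n)%Z.
Definition capB (w : config m n) (X : int) : int := \sum_(j < n) ((w (inr j) + X) %/ m)%Z.

Lemma effectiveP (w : config m n) :
  effective w <-> exists X Y, X <= capA w Y /\ Y <= capB w X.
Proof.
split=> [[f [f_ge0 [z fE]]] | [X [Y [XY YX]]]].
  exists (\sum_(i < m) z (inl i)), (\sum_(j < n) z (inr j)).
  split; [apply: ler_sum => i _ | apply: ler_sum => j _]; rewrite lez_divRL //.
    by have := fE (inl i); have := f_ge0 (inl i); rewrite sum_Delta_inl; lra.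
  by have := fE (inr j); have := f_ge0 (inr j); rewrite sum_Delta_inr; lra.
(* Fire each vertex as often as allowed, minus the surplus at one vertex per side. *)
pose i0 : 'I_m := Ordinal m_gt0; pose j0 : 'I_n := Ordinal n_gt0.
pose z c := match c with
  | inl i => ((w (inl i) + Y) %/ n)%Z - (if i == i0 then capA w Y - X else 0)
  | inr j => ((w (inr j) + X) %/ m)%Z - (if j == j0 then capB w X - Y else 0) end.
have zA : \sum_(i < m) z (inl i) = X by rewrite sumrB -big_mkcond big_pred1_eq; ring.
have zB : \sum_(j < n) z (inr j) = Y by rewrite sumrB -big_mkcond big_pred1_eq; ring.
exists (fun x => w x - \sum_(c : V m n) z c * Delta c x); split; last first.
  by exists z => x; ring.
case=> [i|j]; rewrite ?sum_Delta_inl ?sum_Delta_inr ?zA ?zB.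
  have := lez_floor (w (inl i) + Y) (lt0r_neq0 nZ_gt0).
  have : z (inl i) <= ((w (inl i) + Y) %/ n)%Z by rewrite /z; case: (i == i0); lia.
  by rewrite -(ler_pM2r nZ_gt0); lra.
have := lez_floor (w (inr j) + X) (lt0r_neq0 mZ_gt0).
have : z (inr j) <= ((w (inr j) + X) %/ m)%Z by rewrite /z; case: (j == j0); lia.
by rewrite -(ler_pM2r mZ_gt0); lra.
Qed.

Lemma capA_shift (w : config m n) Y k : capA w (Y + k * n%:Z) = capA w Y + k * m%:Z.
Proof.
rewrite /capA; under eq_bigr => i _ do rewrite addrA divzDMr ?lt0r_neq0 //.
by rewrite big_split /= sumr_const card_ord -mulr_natr natz.
Qed.

Lemma capB_shift (w : config m n) X k : capB w (X + k * m%:Z) = capB w X + k * n%:Z.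
Proof.
rewrite /capB; under eq_bigr => j _ do rewrite addrA divzDMr ?lt0r_neq0 //.
by rewrite big_split /= sumr_const card_ord -mulr_natr natz.
Qed.

Lemma capA_homo (w : config m n) : {homo capA w : Y Y' / Y <= Y'}.
Proof. by move=> Y Y' YY'; apply: ler_sum => i _; apply: lez_pdiv2r; lia. Qed.

Lemma capB_homo (w : config m n) : {homo capB w : X X' / X <= X'}.
Proof. by move=> X X' XX'; apply: ler_sum => j _; apply: lez_pdiv2r; lia. Qed.

(* The solutions (X, Y) of the system in [effectiveP] are invariant under
   (X, Y) |-> (X + m, Y + n); the window keeps one solution per orbit. *)
Definition in_window (w : config m n) (p : int * int) : bool :=
  [&& 1 <= p.2, p.2 <= n%:Z, p.1 <= capA w p.2 & p.2 <= capB w p.1].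

Lemma window_shift (w : config m n) X Y : X <= capA w Y -> Y <= capB w X ->
  exists k, in_window w (X + k * m%:Z, Y + k * n%:Z).
Proof.
move=> XY YX; exists (- ((Y - 1) %/ n)%Z).
have := lez_floor (Y - 1) (lt0r_neq0 nZ_gt0); have := ltz_ceil (Y - 1) nZ_gt0.
rewrite /in_window /= capA_shift capB_shift => *; apply/and4P; split; lia.
Qed.

Definition radius (w : config m n) : nat := (\sum_(c : V m n) `|w c| + m * n)%N.

Lemma lez_radius (w : config m n) c : w c <= (radius w)%:Z.
Proof. by rewrite (le_trans (lez_abs _)) // lez_nat /radius (bigD1 c) //= -addnA leq_addr. Qed.

Lemma window_bounded (w : config m n) p :
  in_window w p -> - (radius w)%:Z <= p.1 <= (radius w)%:Z.
Proof.
case: p => X Y /and4P[/= Y_ge1 Y_len XY YX]; apply/andP; split.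
  rewrite leNgt; apply/negP => X_small.
  suff : capB w X <= 0 by lia.
  apply: sumr_le0 => j _; rewrite -ltzD1 add0r ltz_divLR //.
  by apply: le_lt_trans (lerD (lez_radius w (inr j)) (lexx X)) _; lia.
apply: (le_trans XY); apply: (@le_trans _ _ (\sum_(i < m) (`|w (inl i)| + n)%N%:Z)).
  apply: ler_sum => i _; have := lez_floor (w (inl i) + Y) (lt0r_neq0 nZ_gt0).
  have := lez_abs (w (inl i)); nia.
rewrite -(big_morph Posz PoszD (erefl _)) lez_nat big_split /= sum_nat_const card_ord.
by rewrite /radius big_sumType /= -addnA leq_add2l leq_addl.
Qed.

Definition box (K : int) : seq (int * int) :=
  [seq (X, n%:Z - t%:Z) | t <- iota 0 n, X <- zrange (- K) K].

Lemma box_uniq K : uniq (box K).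
Proof.
apply: allpairs_uniq; rewrite ?iota_uniq ?zrange_uniq //.
by move=> [t X] [t' X'] _ _ /= [-> e]; congr pair; lia.
Qed.

Lemma window_in_box K (w : config m n) p : (radius w)%:Z <= K -> in_window w p -> p \in box K.
Proof.
move=> wK wp; have /andP[lo hi] := window_bounded wp.
case: p wp lo hi => X Y /and4P[/= Y_ge1 Y_len _ _] lo hi.
apply/allpairsP; exists (`|n%:Z - Y|%N, X); split.
- by rewrite /= mem_iota add0n; lia.
- by rewrite /= mem_zrange; lia.
- by rewrite /=; congr pair; lia.
Qed.

Definition wcount (K : int) (w : config m n) : nat := count (in_window w) (box K).

Lemma eq_wcount K (w w' : config m n) : w =1 w' -> wcount K w = wcount K w'.
Proof.
move=> ww'; have eA Y : capA w Y = capA w' Y by apply: eq_bigr => i _; rewrite ww'.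
have eB X : capB w X = capB w' X by apply: eq_bigr => j _; rewrite ww'.
by apply: eq_count => -[X Y]; rewrite /in_window /= eA eB.
Qed.

Lemma wcount_gt0_effective K (w : config m n) : (0 < wcount K w)%N -> effective w.
Proof.
by rewrite effectiveP -has_count => /hasP[[X Y] _ /and4P[_ _ XY YX]]; exists X, Y.
Qed.

Lemma effective_wcount_gt0 K (w : config m n) :
  (radius w)%:Z <= K -> effective w -> (0 < wcount K w)%N.
Proof.
move=> wK /effectiveP[X [Y [XY YX]]]; have [k wk] := window_shift XY YX.
rewrite -has_count; apply/hasP; exists (X + k * m%:Z, Y + k * n%:Z) => //.
exact: window_in_box wk.
Qed.

Definition decr (w : config m n) (c : V m n) : config m n :=
  fun x => w x - (if x == c then 1 else 0).

Lemma capA_decr_inl (w : config m n) i Y :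
  capA (decr w (inl i)) Y = capA w Y - (if (n%:Z %| w (inl i) + Y)%Z then 1 else 0).
Proof.
rewrite /capA (bigD1 i) // [in RHS](bigD1 i) //= /decr eqxx addrAC divz_predE //.
rewrite (eq_bigr (fun i' => ((w (inl i') + Y) %/ n)%Z)) => [|i' i'i]; first ring.
by rewrite -sum_eqE /= (negbTE i'i) subr0.
Qed.

Lemma capB_decr_inr (w : config m n) j X :
  capB (decr w (inr j)) X = capB w X - (if (m%:Z %| w (inr j) + X)%Z then 1 else 0).
Proof.
rewrite /capB (bigD1 j) // [in RHS](bigD1 j) //= /decr eqxx addrAC divz_predE //.
rewrite (eq_bigr (fun j' => ((w (inr j') + X) %/ m)%Z)) => [|j' j'j]; first ring.
by rewrite -sum_eqE /= (negbTE j'j) subr0.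
Qed.

Lemma capB_decr_inl (w : config m n) i X : capB (decr w (inl i)) X = capB w X.
Proof. by apply: eq_bigr => j _; rewrite /decr subr0. Qed.

Lemma capA_decr_inr (w : config m n) j Y : capA (decr w (inr j)) Y = capA w Y.
Proof. by apply: eq_bigr => i _; rewrite /decr subr0. Qed.

Lemma in_window_decr (w : config m n) c p : in_window (decr w c) p -> in_window w p.
Proof.
case: p => X Y; rewrite /in_window /= => /and4P[-> -> +] /=.
case: c => [i|j]; rewrite ?capA_decr_inl ?capB_decr_inl ?capA_decr_inr ?capB_decr_inr;
  by case: ifP => _ XY YX; apply/andP; split; lia.
Qed.

Definition lost (w : config m n) c p := in_window w p && ~~ in_window (decr w c) p.

Lemma lost_inl (w : config m n) i X Y : lost w (inl i) (X, Y) ->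
  [/\ 1 <= Y <= n%:Z, (n%:Z %| w (inl i) + Y)%Z & X = capA w Y].
Proof.
rewrite /lost /in_window /= capA_decr_inl capB_decr_inl => /andP[/and4P[-> -> XY ->]] /=.
by rewrite andbT; case: ifP; rewrite ?subr0 ?XY // -ltNge; split => //; lia.
Qed.

Lemma lost_inr (w : config m n) j X Y : lost w (inr j) (X, Y) ->
  [/\ 1 <= Y <= n%:Z, (m%:Z %| w (inr j) + X)%Z & Y = capB w X].
Proof.
rewrite /lost /in_window /= capA_decr_inr capB_decr_inr => /andP[/and4P[-> -> -> YX]] /=.
by case: ifP; rewrite ?subr0 ?YX // -ltNge; split => //; lia.
Qed.

Lemma lost_uniq (w : config m n) c p q : lost w c p -> lost w c q -> p = q.
Proof.
case: p q => X1 Y1 [X2 Y2]; case: c => [i|j].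
  move=> /lost_inl[/andP[Y1_ge1 Y1_len] d1 ->] /lost_inl[/andP[Y2_ge1 Y2_len] d2 ->].
  by case: (dvdz_sep nZ_gt0 d1 d2) => [/addrI -> // | e | e]; exfalso; lia.
move=> /lost_inr[/andP[Y1_ge1 Y1_len] d1 eY1] /lost_inr[/andP[Y2_ge1 Y2_len] d2 eY2].
have gap X X' : X + m%:Z <= X' -> capB w X + n%:Z <= capB w X'.
  by move=> XX'; rewrite -[n%:Z]mul1r -capB_shift capB_homo // mul1r.
case: (dvdz_sep mZ_gt0 d1 d2) => [/addrI eX | e | e]; first by rewrite eY1 eY2 eX.
  by have := gap X1 X2 (ltac:(lia)); lia.
by have := gap X2 X1 (ltac:(lia)); lia.
Qed.

(** * The window count computes the rank *)

Lemma wcount_decrE K (w : config m n) c :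
  wcount K w = (wcount K (decr w c) + count (lost w c) (box K))%N.
Proof.
rewrite /wcount -count_predUI (@eq_count _ (predI _ _) pred0) ?count_pred0 ?addn0 => [|p].
  apply: eq_count => p /=; rewrite /lost.
  by case: (boolP (in_window (decr w c) p)) => [/in_window_decr ->|]; rewrite ?andbT.
by rewrite /= /lost; case: (in_window (decr w c) p); rewrite ?andbF.
Qed.

Lemma count_lost_le1 K (w : config m n) c : (count (lost w c) (box K) <= 1)%N.
Proof. exact: uniq_count_le1 (box_uniq K) (@lost_uniq w c). Qed.

Lemma wcount_decr_le K (w : config m n) c : (wcount K w <= (wcount K (decr w c)).+1)%N.
Proof. by rewrite (wcount_decrE K w c) -addn1 leq_add2l count_lost_le1. Qed.

Lemma capA_jump (w : config m n) Y :
  capA w (Y - 1) < capA w Y -> exists i, (n%:Z %| w (inl i) + Y)%Z.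
Proof.
case: (pickP (fun i => (n%:Z %| w (inl i) + Y)%Z)) => [i ? _ | none]; first by exists i.
rewrite /capA (eq_bigr (fun i => ((w (inl i) + Y) %/ n)%Z)) ?ltxx // => i _.
by rewrite addrA divz_predE // none subr0.
Qed.

Lemma capA_last_jump (w : config m n) Y : exists Y',
  [/\ Y' <= Y, capA w Y' = capA w Y & capA w (Y' - 1) < capA w Y'].
Proof.
have drop : exists d : nat, capA w (Y - d%:Z) < capA w Y.
  by exists n; have := capA_shift w Y (-1); rewrite !mulN1r => ->; lia.
case: (ex_minnP drop) => -[|d]; first by rewrite subr0 ltxx.
move=> dropd min_drop; exists (Y - d%:Z).
have capE : capA w (Y - d%:Z) = capA w Y.
  apply/eqP; rewrite eq_le capA_homo ?andbT; last by lia.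
  by rewrite leNgt; apply/negP => /min_drop; rewrite ltnn.
by split => //; [lia | rewrite capE (_ : Y - d%:Z - 1 = Y - d.+1%:Z) //; lia].
Qed.

(* At the last jump Y' of capA w below a window point, the vertex a_i causing
   the jump carries a chip whose removal destroys a window point. *)
Lemma wcount_decr_inl K (w : config m n) : (radius w)%:Z <= K -> (0 < wcount K w)%N ->
  exists i, wcount K w = (wcount K (decr w (inl i))).+1.
Proof.
move=> wK; rewrite -has_count => /hasP[[X Y] _ /and4P[_ _ XY YX]].
have [Y' [Y'Y capE jump]] := capA_last_jump w Y.
have [i dvd] := capA_jump jump; exists i.
have Y'_le : Y' <= capB w (capA w Y').
  by rewrite capE (le_trans Y'Y) // (le_trans YX) // capB_homo.
have [k wk] := window_shift (lexx _) Y'_le.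
set p := (capA w Y' + k * m%:Z, Y' + k * n%:Z) in wk.
have lost_p : lost w (inl i) p.
  rewrite /lost wk /p /in_window /= capA_decr_inl capA_shift addrA rpredD ?dvdz_mull //.
  by apply/negP => /and4P[_ _ ? _]; lia.
rewrite (wcount_decrE K w (inl i)) -addn1; congr addn; apply/eqP.
rewrite eqn_leq count_lost_le1 -has_count; apply/hasP; exists p => //.
exact: window_in_box wK wk.
Qed.

Lemma wcount_csub_le K (u f : config m n) (d : nat) :
  nonneg f -> degree f = d%:Z -> (wcount K u <= wcount K (csub u f) + d)%N.
Proof.
elim: d f => [|d IH] f f_ge0 fd.
  have f0 c : f c = 0 by apply: (psumr_eq0P (fun c _ => f_ge0 c) fd).
  by rewrite addn0 (@eq_wcount K (csub u f) u) // => x; rewrite /csub f0 subr0.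
have [c fc] : exists c, 0 < f c.
  case: (pickP (fun c => 0 < f c)) => [c ?|none]; first by exists c.
  suff : degree f <= 0 by rewrite fd.
  by apply: sumr_le0 => c _; rewrite leNgt none.
have f'_ge0 : nonneg (decr f c).
  by move=> x; rewrite /decr; case: eqP => [->|_]; [lia | rewrite subr0].
have f'd : degree (decr f c) = d%:Z.
  by rewrite /degree sumrB -big_mkcond big_pred1_eq -/(degree f) fd; lia.
have -> : wcount K (csub u f) = wcount K (decr (csub u (decr f c)) c).
  by apply: eq_wcount => x; rewrite /csub /decr; ring.
by have := IH _ f'_ge0 f'd; have := wcount_decr_le K (csub u (decr f c)) c; lia.
Qed.

Lemma radius_csub (u f : config m n) :
  nonneg f -> (radius (csub u f))%:Z <= (radius u)%:Z + degree f.
Proof.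
move=> f_ge0; rewrite /radius !PoszD addrAC lerD2r /degree !(big_morph Posz PoszD (erefl _)).
by rewrite -big_split; apply: ler_sum => c _; have := f_ge0 c; rewrite /csub /=; lia.
Qed.

Lemma wcount_csub_exists K (u : config m n) (N k : nat) :
  (radius u)%:Z + N%:Z <= K -> wcount K u = N -> (k <= N)%N ->
  exists f, [/\ nonneg f, degree f = k%:Z & wcount K (csub u f) = (N - k)%N].
Proof.
move=> uK uN; elim: k => [|k IH] kN.
  exists (fun _ => 0); split => //; first by rewrite /degree big1.
  by rewrite subn0 -uN; apply: eq_wcount => x; rewrite /csub subr0.
have [f [f_ge0 fd fw]] := IH (ltnW kN).
have fK : (radius (csub u f))%:Z <= K.
  by apply: le_trans (radius_csub u f_ge0) _; rewrite fd; apply: le_trans uK; lia.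
have [i fi] := wcount_decr_inl fK (ltac:(rewrite fw; lia)).
exists (fun x => f x + (if x == inl i then 1 else 0)); split.
- by move=> x; have := f_ge0 x; case: (x == inl i); lia.
- by rewrite /degree big_split -big_mkcond big_pred1_eq /= -/(degree f) fd; lia.
- have -> : wcount K (csub u (fun x => f x + (if x == inl i then 1 else 0))) =
            wcount K (decr (csub u f) (inl i)).
    by apply: eq_wcount => x; rewrite /csub /decr; ring.
  by move: fi; rewrite fw; lia.
Qed.

Lemma rank_spec_uniq (u : config m n) r r' : rank_spec u r -> rank_spec u r' -> r = r'.
Proof.
case=> [[f [f_ge0 f_noneff fd]] r_min] [[g [g_ge0 g_noneff gd]] r'_min].
by have := r_min g g_ge0 g_noneff; have := r'_min f f_ge0 f_noneff; lra.
Qed.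

Lemma rankE (u : config m n) r : rank_spec u r -> rank u = r.
Proof. by move=> ur; apply: (rank_spec_uniq _ ur); exact: epsilon_spec (ex_intro _ r ur). Qed.

Lemma rank_wcount K (u : config m n) (N : nat) :
  (radius u)%:Z + N%:Z <= K -> wcount K u = N -> rank u = N%:Z - 1.
Proof.
move=> uK uN; apply: rankE; split.
  have [f [f_ge0 fd fw]] := wcount_csub_exists uK uN (leqnn N).
  exists f; split => //; last by rewrite fd; ring.
  have fK : (radius (csub u f))%:Z <= K by apply: le_trans (radius_csub u f_ge0) _; rewrite fd.
  by move=> /(effective_wcount_gt0 fK); rewrite fw subnn.
move=> f f_ge0 f_noneff; have deg_ge0 : 0 <= degree f by apply: sumr_ge0 => c _.
have := wcount_csub_le K u f_ge0 (esym (gez0_abs deg_ge0)).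
have -> : wcount K (csub u f) = 0%N.
  by apply/eqP; rewrite -leqn0 leqNgt; apply/negP => /wcount_gt0_effective.
by rewrite uN add0n -(gez0_abs deg_ge0) -lez_nat; lia.
Qed.

(** * Parking sorted configurations *)

Section Parking.
Variable u : config m n.
Hypotheses (u_parking : parking u) (u_sorted : sorted_conf u).
Let s0 : 'I_m := Ordinal (sink_lt m_gt0).

Lemma is_sink_inl (i : 'I_m) : is_sink (inl i : V m n) = (i == s0).
Proof. by apply/eqP/eqP => [iE|->] //; apply: val_inj. Qed.

Lemma neq_sink (i : 'I_m) : (i != s0) = (i < m.-1)%N.
Proof. by rewrite -(inj_eq val_inj) /=; have := ltn_ord i; lia. Qed.

Lemma parking_lt_gdeg (c : V m n) : ~~ is_sink c -> u c < gdeg c.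
Proof.
move=> c_ns; case: u_parking => u_ge0 /(_ [set c]); case.
- by apply/set0Pn; exists c; rewrite inE.
- by move=> c'; rewrite inE => /eqP ->.
move=> x [x_ns]; rewrite /DeltaSet big_set1 /Delta; have := u_ge0 x x_ns.
have adj_irr : adj c c = false by case: c {c_ns}.
by case: eqVneq => [->|_]; rewrite ?adj_irr //=; case: (adj c x); lia.
Qed.

Lemma parking_inl_bound (i : 'I_m) : i != s0 -> 0 <= u (inl i) < n%:Z.
Proof.
rewrite -is_sink_inl => i_ns; case: u_parking => u_ge0 _.
by rewrite u_ge0 //; exact: parking_lt_gdeg.
Qed.

Lemma parking_inr_bound (j : 'I_n) : 0 <= u (inr j) < m%:Z.
Proof. by case: u_parking => u_ge0 _; rewrite u_ge0 //; exact: parking_lt_gdeg. Qed.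

Lemma capB_geq (t : 'I_n) X : (n%:Z - t%:Z <= capB u X) = (m%:Z - u (inr t) <= X).
Proof.
have ut := parking_inr_bound t; have tn := ltn_ord t.
apply/idP/idP => [capX|tX].
  rewrite leNgt; apply/negP => Xt; move: capX; apply/negP; rewrite -ltNge.
  apply: (@le_lt_trans _ _ (n - t.+1)%:Z); last by lia.
  rewrite -sum_ord_geq //; apply: ler_sum => j _; have uj := parking_inr_bound j.
  case: ifP => tj; rewrite -ltzD1 ltz_divLR //; first by lra.
  have : u (inr j) <= u (inr t) by apply: u_sorted.2; lia.
  lra.
rewrite subzn ?(ltnW tn) // -sum_ord_geq ?(ltnW tn) //; apply: ler_sum => j _.
have uj := parking_inr_bound j.
case: ifP => tj; last by rewrite divz_ge0 //; lia.
have : u (inr t) <= u (inr j) by apply: u_sorted.2.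
by rewrite lez_divRL //; lra.
Qed.

Definition nsmall (t : nat) : nat :=
  #|[pred i : 'I_m | (i < m.-1)%N && (u (inl i) + 1 <= t%:Z)]|.

Lemma rvecE (j : 'I_n) : rvec u j = u (inr j) + 1 - (nsmall j)%:Z.
Proof. by rewrite /rvec valK. Qed.

Lemma nsmallE (t : nat) :
  (nsmall t)%:Z = \sum_(i | i != s0) (if u (inl i) + 1 <= t%:Z then 1 else 0).
Proof.
rewrite /nsmall -sum1_card (big_morph Posz PoszD (erefl _)) big_mkcond [RHS]big_mkcond /=.
by apply: eq_bigr => i _; rewrite !inE -neq_sink; case: (i != s0); case: (_ <= _).
Qed.

Lemma sum_nonsink (c : int) : \sum_(i | i != s0) c = c * (m%:Z - 1).
Proof. by rewrite sumr_const cardC1 card_ord -mulr_natr natz; congr (_ * _); lia. Qed.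

Lemma capA_col (t : 'I_n) :
  capA u (n%:Z - t%:Z) = m%:Z - (nsmall t)%:Z + ((u (sink n m_gt0) - t%:Z) %/ n)%Z.
Proof.
rewrite /capA (bigD1 s0) //= nsmallE.
rewrite (_ : u (inl s0) + (n%:Z - t%:Z) = (u (inl s0) - t%:Z) + 1 * n%:Z); last by ring.
rewrite divzDMr ?lt0r_neq0 //.
rewrite (eq_bigr (fun i => 1 - (if u (inl i) + 1 <= t%:Z then 1 else 0))) => [|i i_ns].
  by rewrite sumrB !sum_nonsink; ring.
have tn := ltn_ord t; have ui := parking_inl_bound i_ns.
by case: ifP => ut; apply: divz_unique => //; set x := u (inl i) in ui ut *; lia.
Qed.

(* Number of visited right cells minus number of unvisited left cells in the
   column of residue t of the cylindric diagram. *)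
Definition colnet (t : nat) : int := ((u (sink n m_gt0) - t%:Z) %/ n)%Z + rvec u t.

Lemma in_window_row (t : 'I_n) X :
  in_window u (X, n%:Z - t%:Z) = (m%:Z - u (inr t) <= X <= capA u (n%:Z - t%:Z)).
Proof.
have tn := ltn_ord t; rewrite /in_window /= capB_geq.
have -> : 1 <= n%:Z - t%:Z by lia.
have -> : n%:Z - t%:Z <= n%:Z by lia.
by rewrite /= andbC.
Qed.

Lemma window_row_count K (t : 'I_n) : (radius u)%:Z <= K ->
  (count (fun X => in_window u (X, n%:Z - t%:Z)) (zrange (- K) K))%:Z = Num.max 0 (colnet t).
Proof.
move=> uK; under eq_count => X do rewrite in_window_row.
rewrite count_zrange ?size_zrange => [|X]; last first.
  rewrite mem_zrange -in_window_row => /window_bounded /andP[/= lo hi].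
  by rewrite mem_zrange; lia.
by congr (Num.max 0 _); rewrite /colnet capA_col rvecE; ring.
Qed.

Lemma wcount_parking K : (radius u)%:Z <= K ->
  (wcount K u)%:Z = \sum_(t < n) Num.max 0 (colnet t).
Proof.
move=> uK; rewrite /wcount /box count_flatten -map_comp natz_sumn_iota.
by apply: eq_bigr => t _; rewrite /= count_map; exact: window_row_count.
Qed.

Lemma rank_parking : rank u = \sum_(t < n) Num.max 0 (colnet t) - 1.
Proof.
set S := \sum_(t < n) _.
have S_ge0 : 0 <= S by apply: sumr_ge0 => t _; rewrite le_max lexx.
have wS K : (radius u)%:Z <= K -> wcount K u = `|S|%N.
  by move=> uK; apply/eqP; rewrite -eqz_nat gez0_abs // wcount_parking.
rewrite (@rank_wcount ((radius u)%:Z + S) u `|S|%N) ?gez0_abs //.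
by rewrite wS // lerDl.
Qed.

Lemma sum_nsmall : \sum_(t < n) (nsmall t)%:Z = \sum_(i | i != s0) (n%:Z - 1 - u (inl i)).
Proof.
under eq_bigr => t _ do rewrite nsmallE.
rewrite exchange_big /=; apply: eq_bigr => i i_ns.
have := parking_inl_bound i_ns; move: (u (inl i)) => x /andP[x_ge0 x_lt].
rewrite (eq_bigr (fun t : 'I_n => if (`|(x + 1)%R|%N <= t)%N then 1 else 0)) => [|t _].
  by rewrite sum_ord_geq; lia.
by congr (if _ then _ else _); apply/idP/idP; lia.
Qed.

Lemma sum_colnet : \sum_(t < n) colnet t = degree u + 1 - ((m - 1) * (n - 1))%N%:Z.
Proof.
rewrite /colnet big_split /= sum_divz_shift //.
under eq_bigr => t _ do rewrite rvecE.
rewrite !big_split /= sumrN sum_nsmall sumrB sum_nonsink sumr_const card_ord.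
rewrite /degree big_sumType /= [\sum_(i < m) _](bigD1 s0) //= PoszM !subzn //.
rewrite -mulr_natr natz; ring.
Qed.

Lemma counts_right_visited :
  counts (fun x => x <= u (sink n m_gt0) /\ is_right u x) (\sum_(t < n) Num.max 0 (colnet t)).
Proof.
rewrite (eq_bigr (fun t : 'I_n =>
  Num.max 0 (((u (sink n m_gt0) - t%:Z) %/ n)%Z - (1 - rvec u t) + 1))) => [|t _]; last first.
  by rewrite /colnet; congr (Num.max 0 _); ring.
apply: (@counts_by_residue n (fun t => 1 - rvec u t)
  (fun t => ((u (sink n m_gt0) - t%:Z) %/ n)%Z)) => // x.
have [xE _] := divz_modz_nat x n_gt0; move: xE.
set t := `|(x %% n)%Z|%N; set q := (x %/ n)%Z => xE.
rewrite /is_right -/t -/q lez_divRL //.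
by split=> [[xs qr]|/andP[qr xs]]; [apply/andP; split | split]; lra.
Qed.

Lemma counts_left_unvisited :
  counts (fun x => u (sink n m_gt0) < x /\ ~~ is_right u x) (\sum_(t < n) Num.max 0 (- colnet t)).
Proof.
rewrite (eq_bigr (fun t : 'I_n =>
  Num.max 0 (- rvec u t - (((u (sink n m_gt0) - t%:Z) %/ n)%Z + 1) + 1))) => [|t _]; last first.
  by rewrite /colnet; congr (Num.max 0 _); ring.
apply: (@counts_by_residue n (fun t => ((u (sink n m_gt0) - t%:Z) %/ n)%Z + 1)
  (fun t => - rvec u t)) => // x.
have [xE _] := divz_modz_nat x n_gt0; move: xE.
set t := `|(x %% n)%Z|%N; set q := (x %/ n)%Z => xE.
rewrite /is_right -/t -/q -ltNge lezD1 ltz_divLR //.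
have -> : (q + rvec u t < 1) = (q + rvec u t <= 0) by rewrite -ltzD1 add0r.
by split=> [[xs qr]|/andP[xs qr]]; [apply/andP; split | split]; lra.
Qed.

End Parking.

End CompleteBipartite.

Theorem lemma13p1 (m n : nat) (Hm : (0 < m)%N) (Hn : (0 < n)%N) (u : config m n) :
  parking u -> sorted_conf u ->
  counts (fun sigma => u (sink n Hm) < sigma /\ ~~ is_right u sigma)
         (((m - 1) * (n - 1))%N%:Z + rank u - degree u)
  /\ counts (fun sigma => sigma <= u (sink n Hm) /\ is_right u sigma) (rank u + 1).
Proof.
move=> u_parking u_sorted.
have rank_u := rank_parking Hm Hn u_parking u_sorted.
split; last by rewrite rank_u subrK; exact: counts_right_visited.
have -> : ((m - 1) * (n - 1))%N%:Z + rank u - degree u =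
          \sum_(t < n) Num.max 0 (- colnet Hm u t).
  under eq_bigr => t _ do rewrite max0N.
  by rewrite sumrB (sum_colnet Hm Hn u_parking) rank_u; ring.
exact: counts_left_unvisited.
Qed.
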